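(* Let $G$ be a topological rough group and $X$ a rough $G$-space with (left, resp. right) rough action $\mu$. Then for every $g\in G$, the left (resp. right) transformation map $L_g:\overline{X}\to\overline{X}$, $L_g(x)=gx$ (resp. $R_g:\overline{X}\to\overline{X}$, $R_g(x)=xg$) is a homeomorphism of $\overline{X}$.
   Context: An approximation space is a pair $(U,R)$ with $U$ a set and $R$ an equivalence relation on $U$; for $X\subseteq U$, $\overline{X}=\bigcup\{[x]_R : [x]_R\cap X\neq\emptyset\}$. Let $U$ carry a binary operation written $xy$. A subset $G\subseteq U$ is a rough group if: (1) $xy\in\overline{G}$ for all $x,y\in G$; (2) $(xy)z=x(yz)$ for all $x,y,z\in\overline{G}$; (3) there is $e\in\overline{G}$ with $xe=ex=x$ for all $x\in G$; (4) for every $x\in G$ there is $y\in G$ with $xy=yx=e$ (written $x^{-1}$). A topological rough group is a rough group $G$ with a topology $\tau$ on $\overline{G}$, $\tau_G$ the subspace topology on $G$, such that $G\times G\to\overline{G}$, $(x,y)\mapsto xy$, is continuous (product of $\tau_G$ to $\tau$) and $G\to G$, $x\mapsto x^{-1}$, is continuous for $\tau_G$. Let $X\subseteq U$ with $\overline{X}$ carrying a topology (and $X$ the subspace topology). A left rough action of $G$ on $X$ is a continuous map $\mu:\overline{G}\times\overline{X}\to\overline{X}$, written $\mu(g,x)=gx$, such that $g(g'x)=(gg')x$ for all $g,g'\in\overline{G}$, $x\in\overline{X}$, and $ex=x$ for all $x\in\overline{X}$, where $e$ is the rough identity. A right rough action is a continuous map $\overline{X}\times\overline{G}\to\overline{X}$,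 $(x,g)\mapsto xg$, with $(xg)g'=x(gg')$ and $xe=x$. $X$ with such an action is called a rough $G$-space. *)

From Stdlib Require Import Relations.

Set Implicit Arguments.

Section Rough.
Variable U : Type.


Definition is_equiv (R : U -> U -> Prop) : Prop :=
  (forall x, R x x) /\ (forall x y, R x y -> R y x) /\
  (forall x y z, R x y -> R y z -> R x z).

(* Upper approximation: union of the R-classes [x]_R meeting X, i.e.
   u is in it iff the class of u contains some element of X. *)
Definition upper (R : U -> U -> Prop) (X : U -> Prop) : U -> Prop :=
  fun u => exists x, X x /\ R u x.

Definition is_topology (S : U -> Prop) (tau : (U -> Prop) -> Prop) : Prop :=
  (forall O, tau O -> forall x, O x -> S x) /\
  tau (fun _ => False) /\ tau S /\
  (forall F : (U -> Prop) -> Prop, (forall O, F O -> tau O) ->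
     tau (fun x => exists O, F O /\ O x)) /\
  (forall O1 O2, tau O1 -> tau O2 -> tau (fun x => O1 x /\ O2 x)).

Definition subspace_top (A : U -> Prop) (tau : (U -> Prop) -> Prop)
  : (U -> Prop) -> Prop :=
  fun O => exists O', tau O' /\ (forall x, O x <-> (O' x /\ A x)).

Definition prod_open (S1 : U -> Prop) (t1 : (U -> Prop) -> Prop)
  (S2 : U -> Prop) (t2 : (U -> Prop) -> Prop) (W : U * U -> Prop) : Prop :=
  (forall p, W p -> S1 (fst p) /\ S2 (snd p)) /\
  (forall p, W p -> exists O1 O2, t1 O1 /\ t2 O2 /\ O1 (fst p) /\ O2 (snd p) /\
     (forall q, O1 (fst q) -> O2 (snd q) -> W q)).

Definition continuous_on (S1 : U -> Prop) (t1 : (U -> Prop) -> Prop)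
  (S2 : U -> Prop) (t2 : (U -> Prop) -> Prop) (f : U -> U) : Prop :=
  (forall x, S1 x -> S2 (f x)) /\
  (forall O, t2 O -> t1 (fun x => S1 x /\ O (f x))).

Definition continuous2_on (S1 : U -> Prop) (t1 : (U -> Prop) -> Prop)
  (S2 : U -> Prop) (t2 : (U -> Prop) -> Prop)
  (S3 : U -> Prop) (t3 : (U -> Prop) -> Prop) (f : U -> U -> U) : Prop :=
  (forall x y, S1 x -> S2 y -> S3 (f x y)) /\
  (forall O, t3 O ->
     prod_open S1 t1 S2 t2 (fun p => S1 (fst p) /\ S2 (snd p) /\ O (f (fst p) (snd p)))).

Definition homeomorphism_on (S : U -> Prop) (tau : (U -> Prop) -> Prop)
  (f : U -> U) : Prop :=
  continuous_on S tau S tau f /\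
  exists h : U -> U, continuous_on S tau S tau h /\
    (forall x, S x -> h (f x) = x) /\ (forall x, S x -> f (h x) = x).

Definition rough_group (R : U -> U -> Prop) (op : U -> U -> U)
  (G : U -> Prop) (e : U) : Prop :=
  (forall x y, G x -> G y -> upper R G (op x y)) /\
  (forall x y z, upper R G x -> upper R G y -> upper R G z ->
     op (op x y) z = op x (op y z)) /\
  upper R G e /\ (forall x, G x -> op x e = x /\ op e x = x) /\
  (forall x, G x -> exists y, G y /\ op x y = e /\ op y x = e).

Definition topological_rough_group (R : U -> U -> Prop) (op : U -> U -> U)
  (G : U -> Prop) (e : U) (tau : (U -> Prop) -> Prop) : Prop :=
  rough_group R op G e /\ is_topology (upper R G) tau /\
  continuous2_on G (subspace_top G tau) G (subspace_top G tau)
                 (upper R G) tau op /\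
  exists inv : U -> U,
    (forall x, G x -> G (inv x) /\ op x (inv x) = e /\ op (inv x) x = e) /\
    continuous_on G (subspace_top G tau) G (subspace_top G tau) inv.

Definition left_rough_action (R : U -> U -> Prop) (op : U -> U -> U)
  (G : U -> Prop) (e : U) (tau : (U -> Prop) -> Prop)
  (X : U -> Prop) (tauX : (U -> Prop) -> Prop) (mu : U -> U -> U) : Prop :=
  continuous2_on (upper R G) tau (upper R X) tauX (upper R X) tauX mu /\
  (forall g g' x, upper R G g -> upper R G g' -> upper R X x ->
     mu g (mu g' x) = mu (op g g') x) /\
  (forall x, upper R X x -> mu e x = x).

Definition right_rough_action (R : U -> U -> Prop) (op : U -> U -> U)
  (G : U -> Prop) (e : U) (tau : (U -> Prop) -> Prop)
  (X : U -> Prop) (tauX : (U -> Prop) -> Prop) (mu : U -> U -> U) : Prop :=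
  continuous2_on (upper R X) tauX (upper R G) tau (upper R X) tauX mu /\
  (forall g g' x, upper R G g -> upper R G g' -> upper R X x ->
     mu (mu x g) g' = mu x (op g g')) /\
  (forall x, upper R X x -> mu x e = x).

End Rough.

(* A translation by g is continuous because it is a slice of the jointly
   continuous action, and the translation by the rough inverse of g is a
   continuous two-sided inverse of it by the action laws. *)
From Stdlib Require Import FunctionalExtensionality PropExtensionality.

Set Implicit Arguments.

Lemma open_ext (U : Type) (tau : (U -> Prop) -> Prop) (A B : U -> Prop) :
  (forall x, A x <-> B x) -> tau B -> tau A.
Proof.
  intros AB tauB.
  replace A with B; [exact tauB |].
  apply functional_extensionality; intro x.
  apply propositional_extensionality; symmetry; apply AB.
Qed.

Lemma open_of_nbhs (U : Type) (S : U -> Prop) (tau : (U -> Prop) -> Prop)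
  {A : U -> Prop} :
  is_topology S tau ->
  (forall x, A x -> exists O, tau O /\ O x /\ forall y, O y -> A y) -> tau A.
Proof.
  intros [_ [_ [_ [union_open _]]]] nbhsA.
  apply open_ext with
    (B := fun x => exists O, (tau O /\ forall y, O y -> A y) /\ O x).
  - intro x; split.
    + intros Ax; destruct (nbhsA x Ax) as [O [tauO [Ox OA]]].
      exists O; auto.
    + intros [O [[_ OA] Ox]]; auto.
  - apply union_open; tauto.
Qed.

Section Slices.
Variables (U : Type) (S1 S2 S3 : U -> Prop) (t1 t2 t3 : (U -> Prop) -> Prop).
Variable f : U -> U -> U.
Hypothesis f_cont : continuous2_on S1 t1 S2 t2 S3 t3 f.

Lemma continuous2_on_slice_l {g : U} :
  is_topology S2 t2 -> S1 g -> continuous_on S2 t2 S3 t3 (f g).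
Proof.
  destruct f_cont as [f_maps f_open]; intros top2 S1g; split; [auto |].
  intros O tauO; apply (open_of_nbhs top2).
  intros x [S2x Ofgx].
  destruct (proj2 (f_open O tauO) (g, x)) as [O1 [O2 [_ [t2O2 [O1g [O2x box]]]]]];
    [simpl; auto |].
  exists O2; split; [exact t2O2 | split; [exact O2x |]].
  intros y O2y; destruct (box (g, y)) as [_ [? ?]]; simpl; auto.
Qed.

Lemma continuous2_on_slice_r {g : U} :
  is_topology S1 t1 -> S2 g -> continuous_on S1 t1 S3 t3 (fun x => f x g).
Proof.
  destruct f_cont as [f_maps f_open]; intros top1 S2g; split; [auto |].
  intros O tauO; apply (open_of_nbhs top1).
  intros x [S1x Ofxg].
  destruct (proj2 (f_open O tauO) (x, g)) as [O1 [O2 [t1O1 [_ [O1x [O2g box]]]]]];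
    [simpl; auto |].
  exists O1; split; [exact t1O1 | split; [exact O1x |]].
  intros y O1y; destruct (box (y, g)) as [? [_ ?]]; simpl; auto.
Qed.

End Slices.

Lemma sub_upper (U : Type) (R : U -> U -> Prop) {A : U -> Prop} {x : U} :
  is_equiv R -> A x -> upper R A x.
Proof. intros [refl _] Ax; exists x; auto. Qed.

Section Translations.
Variables (U : Type) (R : U -> U -> Prop) (op : U -> U -> U) (G : U -> Prop).
Variables (e : U) (tau : (U -> Prop) -> Prop).
Variables (X : U -> Prop) (tauX : (U -> Prop) -> Prop) (mu : U -> U -> U).
Hypothesis topX : is_topology (upper R X) tauX.
Variables g g' : U.
Hypotheses (Gg : upper R G g) (Gg' : upper R G g').
Hypotheses (gg' : op g g' = e) (g'g : op g' g = e).

Lemma left_translation_homeomorphism :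
  left_rough_action R op G e tau X tauX mu ->
  homeomorphism_on (upper R X) tauX (mu g).
Proof.
  intros [mu_cont [mu_assoc mu_e]].
  split; [exact (continuous2_on_slice_l mu_cont topX Gg) |].
  exists (mu g'); split; [exact (continuous2_on_slice_l mu_cont topX Gg') |].
  split; intros x Xx; rewrite mu_assoc; auto.
  - rewrite g'g; auto.
  - rewrite gg'; auto.
Qed.

Lemma right_translation_homeomorphism :
  right_rough_action R op G e tau X tauX mu ->
  homeomorphism_on (upper R X) tauX (fun x => mu x g).
Proof.
  intros [mu_cont [mu_assoc mu_e]].
  split; [exact (continuous2_on_slice_r mu_cont topX Gg) |].
  exists (fun x => mu x g');
    split; [exact (continuous2_on_slice_r mu_cont topX Gg') |].
  split; intros x Xx; rewrite mu_assoc; auto.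
  - rewrite gg'; auto.
  - rewrite g'g; auto.
Qed.

End Translations.

Theorem mainTheorem5 (U : Type) (R : U -> U -> Prop) (op : U -> U -> U)
  (G : U -> Prop) (e : U) (tau : (U -> Prop) -> Prop)
  (X : U -> Prop) (tauX : (U -> Prop) -> Prop) :
  is_equiv R ->
  topological_rough_group R op G e tau ->
  is_topology (upper R X) tauX ->
  (forall mu : U -> U -> U, left_rough_action R op G e tau X tauX mu ->
     forall g, G g -> homeomorphism_on (upper R X) tauX (fun x => mu g x)) /\
  (forall mu : U -> U -> U, right_rough_action R op G e tau X tauX mu ->
     forall g, G g -> homeomorphism_on (upper R X) tauX (fun x => mu x g)).
Proof.
  intros equivR [[_ [_ [_ [_ G_inv]]]] _] topX.
  split; intros mu mu_action g Gg;
    destruct (G_inv g Gg) as [g' [Gg' [gg' g'g]]].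
  - exact (left_translation_homeomorphism topX (sub_upper equivR Gg)
             (sub_upper equivR Gg') gg' g'g mu_action).
  - exact (right_translation_homeomorphism topX (sub_upper equivR Gg)
             (sub_upper equivR Gg') gg' g'g mu_action).
Qed.
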